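(* For all integers $n,m\ge 3$, $\gamma_t(C_n\times C_m)\le\gamma_t(C_{n+1}\times C_m)$ and $\gamma_p(C_n\times C_m)\le\gamma_p(C_{n+1}\times C_m)$.
   Context: All graphs are finite, simple and undirected. $C_n$ denotes the cycle of order $n$ and $G\times H$ the Cartesian product of graphs. For a graph $G$ without isolated vertices: a set $D\subseteq V(G)$ is a total dominating set if every vertex of $G$ (including those in $D$) has a neighbour in $D$; $\gamma_t(G)$ is the minimum size of a total dominating set. A set $D\subseteq V(G)$ is a paired dominating set if every vertex outside $D$ has a neighbour in $D$ and the induced subgraph $G[D]$ has a perfect matching; $\gamma_p(G)$ is the minimum size of a paired dominating set. *)

From mathcomp Require Import all_boot.
Set Implicit Arguments. Unset Strict Implicit. Unset Printing Implicit Defensive.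

(* Cycle C_n on vertices 'I_n: i ~ j iff i <> j and j = i+1 mod n or i = j+1 mod n.
   For n >= 3 this is the usual simple cycle. *)
Definition cycle_adj (n : nat) : rel 'I_n :=
  fun i j => (i != j) && ((j == (i.+1 %% n) :> nat) || (i == (j.+1 %% n) :> nat)).

Definition cart_adj (T1 T2 : finType) (e1 : rel T1) (e2 : rel T2) : rel (T1 * T2) :=
  fun x y => ((x.1 == y.1) && e2 x.2 y.2) || ((x.2 == y.2) && e1 x.1 y.1).

Definition torus_adj (n m : nat) : rel ('I_n * 'I_m) :=
  cart_adj (@cycle_adj n) (@cycle_adj m).
Arguments torus_adj : clear implicits.

Section Dom.
Variables (T : finType) (e : rel T).

Definition total_dominating (D : {set T}) : bool :=
  [forall v, [exists u in D, e v u]].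

Definition dominating (D : {set T}) : bool :=
  [forall v, (v \notin D) ==> [exists u in D, e v u]].

(* the induced subgraph G[D] has a perfect matching: an involution p on D
   with each x in D adjacent to its partner p x *)
Definition has_perfect_matching (D : {set T}) : bool :=
  [exists p : {ffun T -> T},
     [forall x in D, [&& p x \in D, e x (p x) & p (p x) == x]]].

Definition paired_dominating (D : {set T}) : bool :=
  dominating D && has_perfect_matching D.

(* minimum sizes (default #|T| if no such set exists) *)
Definition gamma_t : nat :=
  \big[minn/#|T|]_(D : {set T} | total_dominating D) #|D|.

Definition gamma_p : nat :=
  \big[minn/#|T|]_(D : {set T} | paired_dominating D) #|D|.

End Dom.

From mathcomp Require Import all_boot order zify.
Set Implicit Arguments. Unset Strict Implicit. Unset Printing Implicit Defensive.

(* The map (i, j) |-> (min(i, n-1), j) merges the last column of C_{n+1} x C_m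
   into its neighbour: it is onto C_n x C_m and sends every edge to an edge or
   collapses it.  The image S of a total (resp. paired) dominating set D then
   fails to be one only at vertices that can each be repaired by one new vertex,
   and every such failure is charged injectively to a vertex of D sharing its
   image with another vertex of D, so the repaired set has at most |D| vertices. *)

Definition weak_hom (T : Type) (T' : eqType) (e : rel T) (e' : rel T') (f : T -> T') :=
  forall x y, e x y -> f x != f y -> e' (f x) (f y).

Section Matching.
Variables (T : finType) (e : rel T).

Definition matched_by (q : T -> T) (W : {set T}) :=
  {in W, forall x, [/\ q x \in W, e x (q x) & q (q x) = x]}.

Lemma has_perfect_matchingP W :
  reflect (exists q, matched_by q W) (has_perfect_matching e W).
Proof.
apply: (iffP existsP) => [[p /forallP mp] | [q mq]].
  by exists p => x xW; have /implyP/(_ xW)/and3P[-> -> /eqP] := mp x.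
exists [ffun x => q x]; apply/forallP => x; apply/implyP => xW.
by have [qW eq qq] := mq x xW; rewrite !ffunE qW eq qq eqxx.
Qed.

Lemma matched_by_swap q W x z : symmetric e -> irreflexive e ->
  matched_by q W -> x \notin W -> z \notin W -> e x z ->
  matched_by (fun y => if y == x then z else if y == z then x else q y)
    (x |: (z |: W)).
Proof.
move=> sym irr mq xW zW exz.
have zx : z != x by apply: contraTneq exz => ->; rewrite irr.
move=> y; rewrite !inE; case: (eqVneq y x) => [->|yx] /=.
  by rewrite (negbTE zx) eqxx orbT exz.
case: (eqVneq y z) => [->|yz] //= yW.
  by rewrite eqxx sym exz.
have [qW eq qq] := mq y yW.
have qx : q y != x by apply: contraNneq xW => <-.
have qz : q y != z by apply: contraNneq zW => <-.
by rewrite (negbTE qx) (negbTE qz) qW qq !orbT.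
Qed.

End Matching.

Section PairedRepair.
Variables (T : finType) (e : rel T).
Hypotheses (irr : irreflexive e) (sym : symmetric e)
  (no_isolated : forall v, exists u, e v u).

Lemma dominating_subset (S S' : {set T}) :
  S \subset S' -> dominating e S -> dominating e S'.
Proof.
move=> sSS' /forallP dS; apply/forallP => v; apply/implyP => vS'.
have vS : v \notin S by apply: contra vS' => /(subsetP sSS').
have /implyP/(_ vS)/existsP[u /andP[uS vu]] := dS v.
by apply/existsP; exists u; rewrite (subsetP sSS') ?vu.
Qed.

Lemma dominating_setD1 (S : {set T}) u : dominating e S ->
  (forall z, e u z -> z \in S) -> dominating e (S :\ u).
Proof.
move=> /forallP dS closed_u; apply/forallP => v; apply/implyP.
rewrite !inE negb_and negbK; case: (eqVneq v u) => [->|vu] /= vS.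
  have [z uz] := no_isolated u.
  apply/existsP; exists z; rewrite !inE closed_u // uz !andbT.
  by apply: contraTneq uz => ->; rewrite irr.
have /implyP/(_ vS)/existsP[w /andP[wS vw]] := dS v.
apply/existsP; exists w; rewrite !inE wS vw !andbT.
by apply: contraNneq vS => wu; rewrite closed_u // sym -wu.
Qed.

(* An unmatched u in S is paired with a neighbour outside S if it has one;
   otherwise all its neighbours lie in S and u can simply be dropped. *)
Lemma gamma_p_le_repair (S W : {set T}) q : dominating e S -> W \subset S ->
  matched_by e q W -> gamma_p e <= #|S| + #|S :\: W|.
Proof.
move Ek : #|S :\: W| => k; elim: k S W q Ek => [|k IH] S W q Ek dS sWS mq.
  have /eqP SW : S == W.
    by rewrite eqEsubset sWS -setD_eq0 -cards_eq0 Ek.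
  rewrite addn0; apply: (Order.TotalTheory.bigmin_le_cond (T := nat)).
  by rewrite /paired_dominating dS; apply/has_perfect_matchingP; exists q; rewrite SW.
have [u uSW] : exists u, u \in S :\: W.
  by apply/set0Pn; rewrite -card_gt0 Ek.
have cardSWu : #|(S :\: W) :\ u| = k by move: Ek; rewrite (cardsD1 u) uSW => -[].
move: uSW; rewrite inE => /andP[uW uS].
case: (boolP [exists z, e u z && (z \notin S)]) => [/existsP[z /andP[uz zS]] | closed].
  have zW : z \notin W by apply: contra zS => /(subsetP sWS).
  have := IH (z |: S) (u |: (z |: W)) _ _ _ _ (matched_by_swap sym irr mq uW zW uz).
  rewrite cardsU1 zS addSn -addnS; apply.
  - rewrite -cardSWu; apply: eq_card => y; rewrite !inE.
    case: (eqVneq y u) => [//|_] /=.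
    by case: (eqVneq y z) => [->|_] /=; rewrite ?(negbTE zS) ?andbF.
  - by apply: dominating_subset dS; apply: subsetUr.
  - apply/subsetP => y; rewrite !inE.
    by case/or3P => [/eqP->|/eqP->|/(subsetP sWS)->]; rewrite ?uS ?eqxx ?orbT.
have closed_u : forall z, e u z -> z \in S.
  by move=> z uz; apply: contraR closed => zS; apply/existsP; exists z; rewrite uz.
apply: leq_trans (IH (S :\ u) W q _ (dominating_setD1 dS closed_u) _ mq) _.
- by rewrite -cardSWu; apply: eq_card => y; rewrite !inE andbCA.
- by apply/subsetP => y yW; rewrite !inE (subsetP sWS) // andbT; apply: contraNneq uW => <-.
- rewrite [#|S|](cardsD1 u) uS; lia.
Qed.

End PairedRepair.

Section Contraction.
Variables (T T' : finType) (e : rel T) (e' : rel T') (phi : T -> T') (x0 : T).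
Hypotheses (irr : irreflexive e) (irr' : irreflexive e') (sym' : symmetric e')
  (no_isolated' : forall v, exists u, e' v u)
  (phi_surj : forall v, exists x, phi x = v) (phi_weak : weak_hom e e' phi).

Section Image.
Variable D : {set T}.

(* A chosen preimage in D; the default x0 is only returned outside phi @: D. *)
Definition preim (w : T') : T := odflt x0 [pick x in D | phi x == w].

Lemma preimP w : w \in phi @: D -> preim w \in D /\ phi (preim w) = w.
Proof.
case/imsetP => x xD ->; rewrite /preim.
by case: pickP => [y /andP[yD /eqP]|/(_ x)] //=; rewrite xD eqxx.
Qed.

Lemma leq_card_excess (X : {set T'}) (f : T' -> T) :
  {in X &, injective f} ->
  {in X, forall w, f w \in D /\ f w \notin preim @: (phi @: D)} ->
  #|X| + #|phi @: D| <= #|D|.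
Proof.
move=> f_inj fX.
have preim_inj : {in phi @: D &, injective preim}.
  by move=> w1 w2 /preimP[_ pw1] /preimP[_ pw2] eq12; rewrite -pw1 -pw2 eq12.
have sub : preim @: (phi @: D) \subset D.
  by apply/subsetP => _ /imsetP[w /preimP[wD _] ->].
have : f @: X \subset D :\: preim @: (phi @: D).
  by apply/subsetP => _ /imsetP[w /fX[fD fP] ->]; rewrite inE fD fP.
move/subset_leq_card; rewrite cardsDS // (card_in_imset f_inj).
have := subset_leq_card sub; rewrite (card_in_imset preim_inj); lia.
Qed.

Lemma gamma_t_le_image : total_dominating e D -> gamma_t e' <= #|D|.
Proof.
move=> /forallP tD; set S := phi @: D.
pose bad := [set v | ~~ [exists u in S, e' v u]].
have merged y u : u \in D -> e y u -> phi y \in bad -> phi u = phi y.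
  move=> uD yu; rewrite inE; apply: contraNeq => ne; apply/existsP.
  by exists (phi u); rewrite imset_f // phi_weak // eq_sym.
have badS v : v \in bad -> v \in S.
  have [y <-] := phi_surj v; have /existsP[u /andP[uD yu]] := tD y.
  by move=> /(merged _ _ uD yu) <-; rewrite imset_f.
pose g v := odflt x0 [pick u in D | e (preim v) u].
have gP v : v \in bad -> [/\ g v \in D, e (preim v) (g v) & phi (g v) = v].
  move=> vb; have [pD pv] := preimP (badS v vb).
  have /existsP[u /andP[uD pu]] := tD (preim v).
  rewrite /g; case: pickP => [u' /andP[u'D pu'] /= | /(_ u)]; last by rewrite uD pu.
  by split; rewrite // (merged _ _ u'D pu') pv.
have card_bad : #|bad| + #|S| <= #|D|.
  apply: (@leq_card_excess _ g) => [v1 v2 /gP[_ _ gv1] /gP[_ _ gv2] eq12|v /gP[gD pg gv]].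
    by rewrite -gv1 -gv2 eq12.
  split=> //; apply/imsetP => -[w /preimP[_ pw] gw].
  have wv : w = v by rewrite -pw -gw gv.
  by move: pg; rewrite gw wv irr.
pose nbr v := odflt v [pick u | e' v u].
have nbrP v : e' v (nbr v).
  rewrite /nbr; case: pickP => // /= none; have [u vu] := no_isolated' v.
  by move: (none u); rewrite vu.
apply: (@leq_trans #|S :|: nbr @: bad|).
  apply: (Order.TotalTheory.bigmin_le_cond (T := nat)); apply/forallP => v.
  case: (boolP (v \in bad)) => [vb | /[!inE] /negPn /existsP[u /andP[uS vu]]].
    by apply/existsP; exists (nbr v); rewrite nbrP inE imset_f ?orbT.
  by apply/existsP; exists u; rewrite inE uS vu.
apply: leq_trans (leq_card_setU _ _) _.
have := leq_imset_card nbr bad; lia.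
Qed.

Lemma gamma_p_le_image : paired_dominating e D -> gamma_p e' <= #|D|.
Proof.
case/andP => /forallP dD /has_perfect_matchingP[p mp]; set S := phi @: D.
(* The matching p of D pushed forward along phi; W is where it stays a matching. *)
pose q w := phi (p (preim w)).
pose W := [set w in S | (q (q w) == w) && (q w != w)].
have qP w : w \in S -> [/\ preim w \in D, phi (preim w) = w,
    p (preim w) \in D, e (preim w) (p (preim w)) & p (p (preim w)) = preim w].
  by move=> /preimP[pD pw]; have [? ? ?] := mp _ pD.
have dS : dominating e' S.
  apply/forallP => v; apply/implyP => vS; have [y yv] := phi_surj v.
  have yD : y \notin D by apply: contra vS => yD; rewrite -yv imset_f.
  have /implyP/(_ yD)/existsP[u /andP[uD yu]] := dD y.
  apply/existsP; exists (phi u); rewrite imset_f //= -yv phi_weak //.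
  by apply: contraNneq vS => yu_eq; rewrite -yv yu_eq imset_f.
have mq : matched_by e' q W.
  move=> w; rewrite !inE => /and3P[wS /eqP qqw qw]; have [_ pw pD pe _] := qP w wS.
  have qS : q w \in S by apply: imset_f.
  have ew : e' w (q w) by rewrite -{1}pw phi_weak // pw eq_sym.
  by split; rewrite // qS qqw eqxx eq_sym.
have card_SW : #|S :\: W| + #|S| <= #|D|.
  apply: (@leq_card_excess _ (fun w => p (preim w))).
    move=> w1 w2; rewrite !inE.
    move=> /andP[_ /qP[_ pw1 _ _ pp1]] /andP[_ /qP[_ pw2 _ _ pp2]] eq12.
    by rewrite -pw1 -pp1 eq12 pp2 pw2.
  move=> w; rewrite !inE => /andP[nW wS]; have [_ pw pD pe pp] := qP w wS.
  split=> //; apply/imsetP => -[w' w'S pw'].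
  have qw : q w = w' by rewrite /q pw'; case: (qP w' w'S).
  have qw' : q w' = w by rewrite /q -pw' pp.
  move: nW; rewrite wS qw qw' eqxx /=; apply/negP/negPn/eqP => ww'.
  by move: pe; rewrite pw' -ww' irr.
have sWS : W \subset S by apply/subsetP => w; rewrite inE => /andP[].
by apply: leq_trans (gamma_p_le_repair irr' sym' no_isolated' dS sWS mq) _; lia.
Qed.

End Image.

Lemma leq_card_surj : #|T'| <= #|T|.
Proof.
rewrite -cardsT -(cardsT T); apply: leq_trans (leq_imset_card phi _).
by apply/subset_leq_card/subsetP => v _; have [x <-] := phi_surj v; apply: imset_f.
Qed.

Lemma gamma_t_contract : gamma_t e' <= gamma_t e.
Proof.
apply: (Order.POrderTheory.le_bigmin (T := nat) _ _ gamma_t_le_image).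
exact: leq_trans (Order.TotalTheory.bigmin_le_id (T := nat) _ _ _ _) leq_card_surj.
Qed.

Lemma gamma_p_contract : gamma_p e' <= gamma_p e.
Proof.
apply: (Order.POrderTheory.le_bigmin (T := nat) _ _ gamma_p_le_image).
exact: leq_trans (Order.TotalTheory.bigmin_le_id (T := nat) _ _ _ _) leq_card_surj.
Qed.

End Contraction.

Section Product.
Variables (T1 T2 : finType) (e1 : rel T1) (e2 : rel T2).

Lemma cart_adj_irr : irreflexive e1 -> irreflexive e2 -> irreflexive (cart_adj e1 e2).
Proof. by move=> irr1 irr2 x; rewrite /cart_adj irr1 irr2 !andbF. Qed.

Lemma cart_adj_sym : symmetric e1 -> symmetric e2 -> symmetric (cart_adj e1 e2).
Proof.
by move=> sym1 sym2 x y; rewrite /cart_adj sym1 sym2 [x.1 == _]eq_sym [x.2 == _]eq_sym.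
Qed.

Lemma cart_adj_no_isolated : (forall v, exists u, e2 v u) ->
  forall x, exists y, cart_adj e1 e2 x y.
Proof.
by move=> nb2 [x1 x2]; have [u x2u] := nb2 x2; exists (x1, u); rewrite /cart_adj eqxx x2u.
Qed.

Lemma cart_adj_weak_hom (T1' T2' : finType) (e1' : rel T1') (e2' : rel T2')
    (f1 : T1 -> T1') (f2 : T2 -> T2') :
  weak_hom e1 e1' f1 -> weak_hom e2 e2' f2 ->
  weak_hom (cart_adj e1 e2) (cart_adj e1' e2') (fun x => (f1 x.1, f2 x.2)).
Proof.
move=> h1 h2 [x1 x2] [y1 y2]; rewrite /cart_adj /= xpair_eqE.
case/orP => /andP[/eqP <- exy]; rewrite eqxx /= ?andbT => ne.
  by rewrite h2.
by rewrite h1 ?orbT.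
Qed.

End Product.

Lemma modn_succ N i : i < N -> i.+1 %% N = if i.+1 < N then i.+1 else 0.
Proof.
move=> iN; case: ifP => [|/negbT]; first exact: modn_small.
by rewrite -leqNgt => Ni; rewrite (@anti_leq i.+1 N) ?iN ?modnn.
Qed.

Lemma cycle_adj_irr N : irreflexive (@cycle_adj N).
Proof. by move=> i; rewrite /cycle_adj eqxx. Qed.

Lemma cycle_adj_sym N : symmetric (@cycle_adj N).
Proof. by move=> i j; rewrite /cycle_adj eq_sym orbC. Qed.

Lemma cycle_adj_no_isolated N : 1 < N -> forall i, exists j, @cycle_adj N i j.
Proof.
move=> N2 i; have lt : i.+1 %% N < N by rewrite ltn_pmod // ltnW.
exists (Ordinal lt); rewrite /cycle_adj /= eqxx andbT -val_eqE /= modn_succ //.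
by case: ifP; lia.
Qed.

Definition cycle_contract n (i : 'I_n.+2) : 'I_n.+1 := inord (minn i n).

Lemma cycle_contract_surj n j : exists i, @cycle_contract n i = j.
Proof.
exists (widen_ord (leqnSn _) j); apply: val_inj.
have := ltn_ord j; rewrite /= inordK /= => *; lia.
Qed.

Lemma cycle_contract_weak_hom n :
  weak_hom (@cycle_adj n.+2) (@cycle_adj n.+1) (@cycle_contract n).
Proof.
move=> i j; rewrite /cycle_adj -!val_eqE /= !inordK; try lia.
have := ltn_ord i; have := ltn_ord j.
rewrite !modn_succ //; try lia.
by case: ifP; case: ifP; case: ifP; case: ifP; lia.
Qed.

Theorem lemma5p1 (n m : nat) : 3 <= n -> 3 <= m ->
  gamma_t (torus_adj n m) <= gamma_t (torus_adj n.+1 m) /\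
  gamma_p (torus_adj n m) <= gamma_p (torus_adj n.+1 m).
Proof.
case: n => [|[|[|k]]] // _ m3; have m_gt0 : 0 < m by apply: leq_trans m3.
pose phi (x : 'I_k.+4 * 'I_m) := (@cycle_contract k.+2 x.1, x.2).
have phi_surj v : exists x, phi x = v.
  by case: v => [i j]; have [i' <-] := cycle_contract_surj i; exists (i', j).
have phi_weak : weak_hom (torus_adj k.+4 m) (torus_adj k.+3 m) phi.
  by apply: cart_adj_weak_hom (@cycle_contract_weak_hom _) (fun _ _ exy _ => exy).
have irr N : irreflexive (torus_adj N m) by apply: cart_adj_irr; apply: cycle_adj_irr.
have sym : symmetric (torus_adj k.+3 m) by apply: cart_adj_sym; apply: cycle_adj_sym.
have no_isolated : forall v, exists u, torus_adj k.+3 m v u.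
  by apply: cart_adj_no_isolated; apply: cycle_adj_no_isolated; apply: ltnW.
have x0 : 'I_k.+4 * 'I_m := (ord0, Ordinal m_gt0).
split; first exact: gamma_t_contract x0 (irr _) no_isolated phi_surj phi_weak.
exact: gamma_p_contract x0 (irr _) (irr _) sym no_isolated phi_surj phi_weak.
Qed.
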